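(* Let $\tau\in\mathbb N$ and $f:\mathbb Z_+\times\mathbb R\to\mathbb R$, continuous in $x$, be asymptotically $\tau$-periodic in time, $f=P+R$. Assume: the $\tau$-periodic solutions of $x(t+1)=P(t,x(t))$ are isolated; every $g\in H^+(f)$ is strictly increasing in $x$; and the solution $\varphi(t,u_0,f)$ of $x(t+1)=f(t,x(t))$, $x(0)=u_0$, is bounded on $\mathbb Z_+$. Then $\varphi(t,u_0,f)$ is asymptotically $\tau$-periodic: there is a $\tau$-periodic sequence $p$ with $\varphi(t,u_0,f)-p(t)\to0$ as $t\to\infty$.
   Context: Asymptotically $\tau$-periodic in time: $f=P+R$ with $P(t+\tau,x)=P(t,x)$ for all $(t,x)$ and $\lim_{t\to\infty}R(t,x)=0$ uniformly in $x$ on compact subsets of $\mathbb R$. $H^+(f)$ is the closure of $\{f(\cdot+h,\cdot):h\in\mathbb Z_+\}$ in the topology of uniform convergence on finite $t$-sets times compact $x$-sets. A $\tau$-periodic solution $\varphi(t,u_0,P)$ (i.e. $\varphi(\tau,u_0,P)=u_0$) of $x(t+1)=P(t,x(t))$ is isolated if there is $\delta>0$ such that no $u\neq u_0$ with $|u-u_0|<\delta$ gives a $\tau$-periodic solution. *)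

From Stdlib Require Import Reals Lra.
Open Scope R_scope.

Fixpoint sol (F : nat -> R -> R) (u0 : R) (t : nat) : R :=
  match t with
  | O => u0
  | S t' => F t' (sol F u0 t')
  end.

Definition periodic_in_time (tau : nat) (P : nat -> R -> R) : Prop :=
  forall t x, P (t + tau)%nat x = P t x.

(* R(t,x) -> 0 as t -> oo, uniformly in x on compact subsets of R
   (every compact set lies in some [-M, M]). *)
Definition vanishes_unif_compact (Rm : nat -> R -> R) : Prop :=
  forall M eps, 0 < eps -> exists T : nat,
    forall t x, (T <= t)%nat -> Rabs x <= M -> Rabs (Rm t x) < eps.

Definition asympt_periodic_decomp (tau : nat) (f P Rm : nat -> R -> R) : Prop :=
  (forall t x, f t x = P t x + Rm t x) /\
  periodic_in_time tau P /\ vanishes_unif_compact Rm.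

Definition periodic_solutions_isolated (tau : nat) (P : nat -> R -> R) : Prop :=
  forall u0, sol P u0 tau = u0 ->
    exists delta, 0 < delta /\
      forall u, u <> u0 -> Rabs (u - u0) < delta -> sol P u tau <> u.

(* g belongs to the hull H^+(f): closure of the translates f(.+h, .), h in Z_+,
   for uniform convergence on finite t-sets times compact x-sets
   (basic neighbourhoods: t in {0..N}, |x| <= M, accuracy eps). *)
Definition in_hull (f g : nat -> R -> R) : Prop :=
  forall (N : nat) (M eps : R), 0 < eps -> exists h : nat,
    forall t x, (t <= N)%nat -> Rabs x <= M ->
      Rabs (f (t + h)%nat x - g t x) < eps.

Definition strictly_increasing_in_x (g : nat -> R -> R) : Prop :=
  forall t x y, x < y -> g t x < g t y.

From Stdlib Require Import Reals Lra Lia.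
From Coquelicot Require Import Rcomplements Rbar Lim_seq.
Open Scope R_scope.

(* Sample the solution at multiples of tau: y k := phi(k tau).  Then
   y (k+1) = Phi_k (y k), where Phi_k is the time-tau map of the shifted
   equation; Phi_k is monotone and converges to the period map Psi of the
   limit equation x(t+1) = P(t,x(t)).  If the bounded sequence y did not
   converge, it would cross every level c strictly between its lim inf and
   lim sup infinitely often in both directions; monotonicity then forces
   Psi c = c (if Psi c < c, once y drops below c it stays below), so a whole
   interval would consist of tau-periodic initial values, contradicting
   isolation.  Hence y k -> q, and phi(k tau + j) -> phi(j, q, P) for every
   residue j, i.e. phi is asymptotic to the tau-periodic solution through q. *)

Lemma continuity_pt_iff_ball (g : R -> R) (s : R) :
  continuity_pt g s <->
  forall eps, 0 < eps -> exists d, 0 < d /\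
    forall x, Rabs (x - s) < d -> Rabs (g x - g s) < eps.
Proof.
  split.
  - intros Hg eps He.
    destruct (Hg eps He) as [d [Hd Hball]].
    exists d; split; [exact Hd|]. intros x Hx.
    destruct (Req_dec x s) as [-> | Hxs].
    + rewrite Rminus_diag, Rabs_R0; exact He.
    + apply Hball; repeat split; auto.
  - intros Hg eps He.
    destruct (Hg eps He) as [d [Hd Hball]].
    exists d; split; [exact Hd|]. intros x [_ Hx]. exact (Hball x Hx).
Qed.

Lemma Rabs_le_of_dist_lt (x s r : R) : Rabs (x - s) < r -> Rabs x <= Rabs s + r.
Proof.
  intros Hxs. pose proof (Rabs_triang (x - s) s) as Htri.
  replace (x - s + s) with x in Htri by ring. lra.
Qed.

Lemma Un_cv_const (c : R) : Un_cv (fun _ => c) c.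
Proof. apply is_lim_seq_Reals, is_lim_seq_const. Qed.

Definition cv_unif_compact (g : nat -> R -> R) (G : R -> R) : Prop :=
  forall M eps, 0 < eps -> exists K : nat,
    forall k x, (K <= k)%nat -> Rabs x <= M -> Rabs (g k x - G x) < eps.

Lemma cv_unif_compact_continuity (g : nat -> R -> R) (G : R -> R) :
  (forall k, continuity (g k)) -> cv_unif_compact g G -> continuity G.
Proof.
  intros Hg Hcv s. apply continuity_pt_iff_ball. intros eps He.
  destruct (Hcv (Rabs s + 1) (eps / 3)) as [K HK]; [lra|].
  destruct (proj1 (continuity_pt_iff_ball (g K) s) (Hg K s) (eps / 3))
    as [d [Hd Hball]]; [lra|].
  exists (Rmin d 1); split; [apply Rmin_pos; lra|]. intros x Hx.
  pose proof (Rmin_l d 1). pose proof (Rmin_r d 1).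
  assert (Hgx : Rabs (g K x - g K s) < eps / 3) by (apply Hball; lra).
  assert (Hx_near : Rabs (g K x - G x) < eps / 3).
  { apply HK; [lia|]. apply Rabs_le_of_dist_lt. lra. }
  assert (Hs_near : Rabs (g K s - G s) < eps / 3).
  { apply HK; [lia|]. pose proof (Rabs_pos s). lra. }
  apply Rabs_def2 in Hgx, Hx_near, Hs_near. apply Rabs_def1; lra.
Qed.

Lemma cv_unif_compact_apply (g : nat -> R -> R) (G : R -> R) (w : nat -> R) (q : R) :
  cv_unif_compact g G -> continuity_pt G q -> Un_cv w q ->
  Un_cv (fun k => g k (w k)) (G q).
Proof.
  intros Hcv HG Hw eps He.
  destruct (proj1 (continuity_pt_iff_ball G q) HG (eps / 2)) as [d [Hd Hball]]; [lra|].
  destruct (Hw (Rmin d 1)) as [K1 HK1]; [apply Rmin_pos; lra|].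
  destruct (Hcv (Rabs q + 1) (eps / 2)) as [K2 HK2]; [lra|].
  exists (max K1 K2). intros k Hk. unfold R_dist.
  assert (Hwk : Rabs (w k - q) < Rmin d 1) by (apply HK1; lia).
  pose proof (Rmin_l d 1). pose proof (Rmin_r d 1).
  assert (HGw : Rabs (G (w k) - G q) < eps / 2) by (apply Hball; lra).
  assert (Hgw : Rabs (g k (w k) - G (w k)) < eps / 2).
  { apply HK2; [lia|]. apply Rabs_le_of_dist_lt. lra. }
  apply Rabs_def2 in HGw, Hgw. apply Rabs_def1; lra.
Qed.

Lemma sol_shift (f : nat -> R -> R) (u0 : R) (s j : nat) :
  sol f u0 (s + j) = sol (fun t => f (s + t)%nat) (sol f u0 s) j.
Proof.
  induction j as [|j IH]; simpl.
  - now rewrite Nat.add_0_r.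
  - now rewrite Nat.add_succ_r, <- IH.
Qed.

Lemma sol_le_compat (g : nat -> R -> R) :
  (forall t x x', x <= x' -> g t x <= g t x') ->
  forall j u u', u <= u' -> sol g u j <= sol g u' j.
Proof.
  intros Hg j u u' Hu. induction j as [|j IH]; simpl; auto.
Qed.

Lemma sol_cv_unif_compact (F : nat -> nat -> R -> R) (G : nat -> R -> R)
    (w : nat -> R) (q : R) :
  (forall j, cv_unif_compact (fun k => F k j) (G j)) ->
  (forall j, continuity (G j)) -> Un_cv w q ->
  forall j, Un_cv (fun k => sol (F k) (w k) j) (sol G q j).
Proof.
  intros HF HG Hw j. induction j as [|j IH]; simpl; [exact Hw|].
  exact (cv_unif_compact_apply _ _ _ _ (HF j) (HG j _) IH).
Qed.

Lemma periodic_in_time_mul (tau : nat) (P : nat -> R -> R) :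
  periodic_in_time tau P -> forall k t x, P (k * tau + t)%nat x = P t x.
Proof.
  intros HP k. induction k as [|k IH]; intros t x; simpl; [reflexivity|].
  replace (tau + k * tau + t)%nat with (k * tau + t + tau)%nat by lia.
  rewrite HP. apply IH.
Qed.

Lemma shifted_cv_unif_compact (tau : nat) (f P Rm : nat -> R -> R) :
  (0 < tau)%nat -> asympt_periodic_decomp tau f P Rm ->
  forall j, cv_unif_compact (fun k => f (k * tau + j)%nat) (P j).
Proof.
  intros Htau [Hf [HP Hvan]] j M eps He.
  destruct (Hvan M eps He) as [T HT]. exists T. intros k x Hk Hx.
  rewrite Hf, <- (periodic_in_time_mul tau P HP k j x).
  replace (_ + _ - _) with (Rm (k * tau + j)%nat x) by ring.
  apply HT; [nia | exact Hx].
Qed.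

Lemma shifted_sol_cv (tau : nat) (f P Rm : nat -> R -> R) :
  (0 < tau)%nat -> (forall t, continuity (f t)) ->
  asympt_periodic_decomp tau f P Rm ->
  forall (w : nat -> R) (q : R), Un_cv w q ->
  forall j, Un_cv (fun k => sol (fun t => f (k * tau + t)%nat) (w k) j) (sol P q j).
Proof.
  intros Htau Hf Hdec w q Hw.
  pose proof (shifted_cv_unif_compact tau f P Rm Htau Hdec) as Hcv.
  apply (sol_cv_unif_compact (fun k t => f (k * tau + t)%nat)); [exact Hcv| |exact Hw].
  intros j. exact (cv_unif_compact_continuity _ _ (fun k => Hf _) (Hcv j)).
Qed.

Lemma in_hull_refl (f : nat -> R -> R) : in_hull f f.
Proof.
  intros N M eps He. exists 0%nat. intros t x _ _.
  rewrite Nat.add_0_r, Rminus_diag, Rabs_R0. exact He.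
Qed.

Lemma strictly_increasing_in_x_le (g : nat -> R -> R) :
  strictly_increasing_in_x g -> forall t x x', x <= x' -> g t x <= g t x'.
Proof.
  intros Hg t x x' [Hlt | ->]; [left; exact (Hg t x x' Hlt) | right; reflexivity].
Qed.

Lemma periodic_solutions_isolated_gap (tau : nat) (P : nat -> R -> R) (a b : R) :
  periodic_solutions_isolated tau P -> a < b ->
  exists c, a < c < b /\ sol P c tau <> c.
Proof.
  intros Hiso Hab. set (c0 := (a + b) / 2).
  destruct (Req_dec (sol P c0 tau) c0) as [Hfix|Hne].
  2: { exists c0; split; [unfold c0; lra | exact Hne]. }
  destruct (Hiso c0 Hfix) as [delta [Hdelta Hd]].
  set (r := Rmin delta (b - c0) / 2).
  assert (Hr : 0 < r < delta /\ r < b - c0).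
  { pose proof (Rmin_l delta (b - c0)). pose proof (Rmin_r delta (b - c0)).
    assert (0 < Rmin delta (b - c0)) by (apply Rmin_pos; unfold c0; lra).
    unfold r; lra. }
  exists (c0 + r). split; [unfold c0 in *; lra|].
  apply Hd; [lra|].
  replace (c0 + r - c0) with r by ring. rewrite Rabs_pos_eq; lra.
Qed.

Definition oscillates_around (y : nat -> R) (c : R) : Prop :=
  (forall N, exists n, (N <= n)%nat /\ y n < c) /\
  (forall N, exists n, (N <= n)%nat /\ c < y n).

Lemma bounded_cv_or_oscillates (y : nat -> R) (B : R) :
  (forall n, Rabs (y n) <= B) ->
  (exists q, Un_cv y q) \/
  (exists a b, a < b /\ forall c, a < c < b -> oscillates_around y c).
Proof.
  intros HB.
  assert (Hbetween : forall n, - B <= y n <= B) by (intros n; apply Rabs_le_between, HB).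
  destruct (ex_LimSup_seq y) as [Ls HLs], (ex_LimInf_seq y) as [Li HLi].
  pose proof (is_LimSup_LimInf_seq_le y Ls Li HLs HLi) as Hle.
  destruct Ls as [L| |]; simpl in HLs.
  2: { destruct (HLs B 0%nat) as [n [_ Hn]]. specialize (Hbetween n). lra. }
  2: { destruct (HLs (- B)) as [N HN]. specialize (HN N (le_n N)).
       specialize (Hbetween N). lra. }
  destruct Li as [l| |]; simpl in HLi, Hle.
  2: contradiction.
  2: { destruct (HLi (- B) 0%nat) as [n [_ Hn]]. specialize (Hbetween n). lra. }
  destruct Hle as [Hlt|Heq].
  - right. exists l, L. split; [exact Hlt|]. intros c [Hlc HcL]. split.
    + intros N. destruct (proj1 (HLi (mkposreal (c - l) ltac:(lra))) N) as [n [Hn Hy]].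
      exists n; split; [exact Hn|]. simpl in Hy; lra.
    + intros N. destruct (proj1 (HLs (mkposreal (L - c) ltac:(lra))) N) as [n [Hn Hy]].
      exists n; split; [exact Hn|]. simpl in Hy; lra.
  - left. exists L. subst l. apply is_lim_seq_Reals, is_LimSup_LimInf_lim_seq; assumption.
Qed.

(* If Phi_k c < c eventually, a trajectory that once drops below c stays
   below c, so it cannot oscillate around c. *)
Lemma oscillates_around_not_lt (Phi : nat -> R -> R) (y : nat -> R) (c d : R) :
  (forall k, y (S k) = Phi k (y k)) ->
  (forall k x x', x <= x' -> Phi k x <= Phi k x') ->
  Un_cv (fun k => Phi k c) d -> oscillates_around y c -> ~ d < c.
Proof.
  intros Hrec Hmono Hcv [Hbelow Habove] Hdc.
  destruct (Hcv (c - d)) as [K HK]; [lra|].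
  destruct (Hbelow K) as [n [Hn Hyn]].
  assert (Hstay : forall m, y (n + m)%nat < c).
  { induction m as [|m IH]; [rewrite Nat.add_0_r; exact Hyn|].
    rewrite Nat.add_succ_r, Hrec.
    specialize (HK (n + m)%nat ltac:(lia)). unfold R_dist in HK.
    apply Rabs_def2 in HK.
    apply Rle_lt_trans with (Phi (n + m)%nat c); [apply Hmono; lra | lra]. }
  destruct (Habove n) as [n' [Hn' Hyn']].
  specialize (Hstay (n' - n)%nat).
  replace (n + (n' - n))%nat with n' in Hstay by lia. lra.
Qed.

Lemma oscillates_around_fixed (Phi : nat -> R -> R) (y : nat -> R) (c d : R) :
  (forall k, y (S k) = Phi k (y k)) ->
  (forall k x x', x <= x' -> Phi k x <= Phi k x') ->
  Un_cv (fun k => Phi k c) d -> oscillates_around y c -> d = c.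
Proof.
  intros Hrec Hmono Hcv Hosc.
  apply Rle_antisym; apply Rnot_lt_le; intros Hcd.
  - (* the mirrored system x |-> - Phi k (- x) *)
    apply (oscillates_around_not_lt (fun k x => - Phi k (- x)) (fun n => - y n) (- c) (- d)).
    + intros k. rewrite Hrec, Ropp_involutive. reflexivity.
    + intros k x x' Hx. apply Ropp_le_contravar, Hmono. lra.
    + replace (- - c) with c by ring. exact (CV_opp _ _ Hcv).
    + destruct Hosc as [Hbelow Habove]. split.
      * intros N. destruct (Habove N) as [n [Hn Hy]]. exists n. split; [exact Hn | lra].
      * intros N. destruct (Hbelow N) as [n [Hn Hy]]. exists n. split; [exact Hn | lra].
    + lra.
  - exact (oscillates_around_not_lt Phi y c d Hrec Hmono Hcv Hosc Hcd).
Qed.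

Lemma Un_cv_mod_interleave (u p : nat -> R) (tau : nat) :
  (0 < tau)%nat ->
  (forall j, (j < tau)%nat -> Un_cv (fun k => u (k * tau + j)%nat) (p j)) ->
  Un_cv (fun t => u t - p (t mod tau)%nat) 0.
Proof.
  intros Htau Hcv eps He.
  assert (Hunif : forall n, (n <= tau)%nat -> exists K, forall j k,
             (j < n)%nat -> (K <= k)%nat -> Rabs (u (k * tau + j)%nat - p j) < eps).
  { induction n as [|n IH]; intros Hn.
    - exists 0%nat. intros j k Hj. lia.
    - destruct (IH ltac:(lia)) as [K1 HK1].
      destruct (Hcv n ltac:(lia) eps He) as [K2 HK2].
      exists (max K1 K2). intros j k Hj Hk.
      destruct (Nat.eq_dec j n) as [-> | Hjn]; [apply HK2 | apply HK1]; lia. }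
  destruct (Hunif tau (le_n tau)) as [K HK].
  exists (K * tau)%nat. intros t Ht. unfold R_dist. rewrite Rminus_0_r.
  pose proof (Nat.div_mod_eq t tau) as Hdiv.
  pose proof (Nat.mod_upper_bound t tau ltac:(lia)) as Hmod.
  assert (HK_le : (K <= t / tau)%nat).
  { destruct (Nat.le_gt_cases K (t / tau)) as [H|H]; [exact H|]. nia. }
  replace t with (t / tau * tau + t mod tau)%nat at 1 by lia.
  apply HK; assumption.
Qed.

Theorem mainTheorem19 (tau : nat) (f P Rm : nat -> R -> R) (u0 : R) :
  (0 < tau)%nat ->
  (forall t, continuity (f t)) ->
  asympt_periodic_decomp tau f P Rm ->
  periodic_solutions_isolated tau P ->
  (forall g, in_hull f g -> strictly_increasing_in_x g) ->
  (exists B, forall t, Rabs (sol f u0 t) <= B) ->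
  exists p : nat -> R,
    (forall t, p (t + tau)%nat = p t) /\
    Un_cv (fun t => sol f u0 t - p t) 0.
Proof.
  intros Htau Hf Hdec Hiso Hmono [B HB].
  set (F := fun k t => f (k * tau + t)%nat).
  set (y := fun k => sol f u0 (k * tau)%nat).
  pose proof (shifted_sol_cv tau f P Rm Htau Hf Hdec) as Hcv.
  destruct (bounded_cv_or_oscillates y B (fun k => HB _)) as [[q Hq]|[a [b [Hab Hosc]]]].
  - exists (fun t => sol P q (t mod tau)). split.
    + intros t. replace (t + tau)%nat with (t + 1 * tau)%nat by lia.
      now rewrite Nat.Div0.mod_add.
    + apply (Un_cv_mod_interleave (sol f u0) (sol P q) tau Htau). intros j _.
      apply is_lim_seq_Reals, (is_lim_seq_ext (fun k => sol (F k) (y k) j)).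
      { intros k. symmetry. apply sol_shift. }
      apply is_lim_seq_Reals, Hcv, Hq.
  - exfalso.
    destruct (periodic_solutions_isolated_gap tau P a b Hiso Hab) as [c [Hc Hne]].
    apply Hne, (oscillates_around_fixed (fun k x => sol (F k) x tau) y); [| | | apply Hosc, Hc].
    + intros k. unfold y. rewrite Nat.mul_succ_l. apply sol_shift.
    + intros k. apply sol_le_compat. intros t.
      exact (strictly_increasing_in_x_le f (Hmono f (in_hull_refl f)) _).
    + exact (Hcv _ _ (Un_cv_const c) tau).
Qed.
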